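(* For every positive integer $n$, $$\big(\mathrm{Id}\ast(\mathrm{Id}\cdot\delta)\big)(n)=\sigma(n)\delta(n)-\big(\mathrm{Id}^2\ast\delta\big)(n),$$ where $\mathrm{Id}\cdot\delta$ is $n\mapsto n\delta(n)$ and $\mathrm{Id}^2(n)=n^2$.
   Context: The arithmetic derivative $\delta$ is defined by $\delta(p)=1$ for every prime $p$ and $\delta(mn)=m\delta(n)+n\delta(m)$ for all positive integers $m,n$; equivalently $\delta(1)=0$ and $\delta(n)=n\sum_{p^\alpha\| n}\alpha/p$. $\mathrm{Id}(n)=n$, $\sigma(n)$ is the sum of the positive divisors of $n$. The Dirichlet convolution is $(u\ast v)(n)=\sum_{d\mid n}u(d)v(n/d)$. *)

From mathcomp Require Import all_boot all_order all_algebra.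
Set Implicit Arguments. Unset Strict Implicit. Unset Printing Implicit Defensive.

(* Arithmetic derivative: delta(n) = n * sum_{p^a || n} a/p
   = sum_{p prime, p | n} (logn p n) * (n %/ p)  (exact since p | n);
   delta 0 = 0 by this formula (primes 0 = [::]), delta 1 = 0. *)
Definition arith_deriv (n : nat) : nat :=
  \sum_(p <- primes n) logn p n * (n %/ p).

Definition sigma (n : nat) : nat := \sum_(d <- divisors n) d.

Definition dconv (u v : nat -> int) (n : nat) : int :=
  (\sum_(d <- divisors n) u d * v (n %/ d)%N)%R.

From mathcomp Require Import all_boot all_order all_algebra.
From mathcomp Require Import zify.
Import GRing.Theory.

(* Writing δ for arith_deriv, the claim is equivalent, over nat,
   to  Σ_{d|n} d·(n/d)·δ(n/d) + Σ_{d|n} d²·δ(n/d) = σ(n)·δ(n).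
   1. δ obeys the Leibniz rule δ(mk) = m·δ(k) + k·δ(m) for m, k > 0.  The
      defining sum ranges over primes n, which depends on n; we first rewrite
      δ as a sum over a fixed range [0, N) of primes-or-not (the extra terms
      vanish because their p-adic valuation is 0), where Leibniz is termwise.
   2. d ↦ n/d permutes the divisors of n, so the first sum is Σ_{d|n} n·δ(d).
   3. For d | n, Leibniz applied to n = d·(n/d) and multiplied by d gives
      d·δ(n) = n·δ(d) + d²·δ(n/d); summing over d | n gives σ(n)·δ(n).
   The integer statement then follows by casting the nat identity. *)

Definition arith_deriv_upto (N n : nat) : nat :=
  \sum_(p <- iota 0 N) logn p n * (n %/ p).

(* For n > 0 every prime divisor of n is below N as soon as n < N, and the
   non-prime-divisor candidates contribute 0, so both sums agree. *)
Lemma arith_deriv_uptoE N n : 0 < n -> n < N ->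
  arith_deriv n = arith_deriv_upto N n.
Proof.
move=> n_gt0 lt_nN; rewrite /arith_deriv_upto (bigID (mem (primes n))) /=.
rewrite [X in _ + X]big1 ?addn0; last first.
  by move=> p; rewrite -logn_gt0 lt0n negbK => /eqP->.
rewrite -big_filter; apply/perm_big/uniq_perm.
- exact: primes_uniq.
- by rewrite filter_uniq ?iota_uniq.
move=> p; rewrite mem_filter mem_iota add0n andbC.
case p_prime: (p \in primes n); last by rewrite andbF.
move: p_prime; rewrite mem_primes => /and3P[_ _ p_dvd_n].
by rewrite (leq_ltn_trans (dvdn_leq n_gt0 p_dvd_n)).
Qed.

(* The p-term of δ(m·k) that comes from the valuation of m: if p divides m
   then (m·k)/p = k·(m/p), and otherwise the valuation vanishes. *)
Lemma logn_mul_divn p m k : 0 < m ->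
  logn p m * (m * k %/ p) = k * (logn p m * (m %/ p)).
Proof.
move=> m_gt0; case: (posnP (logn p m)) => [->|]; first by rewrite !mul0n muln0.
rewrite logn_gt0 mem_primes => /and3P[_ _ p_dvd_m].
by rewrite -divn_mulAC // mulnA [RHS]mulnC.
Qed.

(* Leibniz rule for the truncated sums, proved termwise from
   logn p (m·k) = logn p m + logn p k. *)
Lemma arith_deriv_upto_mul N m k : 0 < m -> 0 < k ->
  arith_deriv_upto N (m * k) =
  m * arith_deriv_upto N k + k * arith_deriv_upto N m.
Proof.
move=> m_gt0 k_gt0; rewrite /arith_deriv_upto !big_distrr -big_split /=.
apply: eq_bigr => p _; rewrite lognM // mulnDl (logn_mul_divn p m k m_gt0).
by rewrite [m * k]mulnC (logn_mul_divn p k m k_gt0) addnC.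
Qed.

Lemma arith_deriv_mul m k : 0 < m -> 0 < k ->
  arith_deriv (m * k) = m * arith_deriv k + k * arith_deriv m.
Proof.
move=> m_gt0 k_gt0; have mk_gt0 : 0 < m * k by rewrite muln_gt0 m_gt0.
by rewrite !(@arith_deriv_uptoE (m * k).+1) ?arith_deriv_upto_mul
  ?ltnS ?leq_pmull ?leq_pmulr.
Qed.

Lemma divn_compl n d : 0 < n -> d %| n -> n %/ (n %/ d) = d.
Proof. by move=> n_gt0 d_dvd_n; rewrite divnA // mulKn. Qed.

Lemma perm_divisors_compl n : 0 < n ->
  perm_eq (divisors n) [seq n %/ d | d <- divisors n].
Proof.
move=> n_gt0; apply: uniq_perm; first exact: divisors_uniq.
  rewrite map_inj_in_uniq ?divisors_uniq // => a b.
  rewrite -!dvdn_divisors // => a_dvd_n b_dvd_n eq_ab.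
  by rewrite -(@divn_compl n a n_gt0 a_dvd_n) eq_ab divn_compl.
move=> d; rewrite -dvdn_divisors //; apply/idP/mapP => [d_dvd_n|[e]].
  by exists (n %/ d); rewrite ?divn_compl // -dvdn_divisors ?dvdn_div.
by rewrite -dvdn_divisors // => e_dvd_n ->; rewrite dvdn_div.
Qed.

(* Leibniz for n = d·(n/d), multiplied by d. *)
Lemma arith_deriv_divisor n d : 0 < n -> d %| n ->
  d * arith_deriv n = n * arith_deriv d + d ^ 2 * arith_deriv (n %/ d).
Proof.
move=> n_gt0 d_dvd_n; have d_gt0 : 0 < d := dvdn_gt0 n_gt0 d_dvd_n.
have q_gt0 : 0 < n %/ d by rewrite divn_gt0 // dvdn_leq.
rewrite -{1 2}(divnK d_dvd_n) mulnC arith_deriv_mul //; lia.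
Qed.

(* The corollary over nat, with the subtraction moved to the left. *)
Lemma sum_divisors_deriv n : 0 < n ->
  \sum_(d <- divisors n) d * (n %/ d * arith_deriv (n %/ d)) +
  \sum_(d <- divisors n) d ^ 2 * arith_deriv (n %/ d) = sigma n * arith_deriv n.
Proof.
move=> n_gt0.
have -> : \sum_(d <- divisors n) d * (n %/ d * arith_deriv (n %/ d)) =
          \sum_(d <- divisors n) n * arith_deriv d.
  rewrite (perm_big _ (perm_divisors_compl n n_gt0)) big_map !big_seq.
  apply: eq_bigr => d; rewrite -dvdn_divisors // => d_dvd_n.
  by rewrite divn_compl // mulnA divnK.
rewrite /sigma big_distrl -big_split /= !big_seq; apply: eq_bigr => d.
rewrite -dvdn_divisors // => d_dvd_n.
by rewrite (arith_deriv_divisor n d n_gt0 d_dvd_n).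
Qed.

Local Open Scope ring_scope.

Lemma dconv_nat (u v : nat -> nat) (n : nat) :
  dconv (fun m => (u m)%:Z) (fun m => (v m)%:Z) n =
  (\sum_(d <- divisors n) u d * v (n %/ d))%N%:Z.
Proof.
rewrite /dconv -natz natr_sum; apply: eq_bigr => d _.
by rewrite natrM !natz.
Qed.

Theorem corollary2p4 (n : nat) : (0 < n)%N ->
  dconv (fun m => m%:Z) (fun m => (m * arith_deriv m)%:Z) n =
  (sigma n * arith_deriv n)%:Z - dconv (fun m => (m ^ 2)%:Z) (fun m => (arith_deriv m)%:Z) n.
Proof.
move=> n_gt0; rewrite !dconv_nat -(sum_divisors_deriv n n_gt0).
by rewrite PoszD addrK.
Qed.
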